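(* The local complexity of the class of unit-distance graphs is $\Omega(n)$.
   Context: A unit-distance graph is a graph whose vertices are points in the plane, two points being adjacent iff their Euclidean distance equals 1. All graphs are finite, simple, connected; $n$ is the number of vertices, with distinct identifiers in $\{1,\dots,\mathrm{poly}(n)\}$. A proof labeling scheme for a class $\mathcal{G}$ consists of a prover assigning a certificate (binary word) to each vertex of each $G\in\mathcal{G}$ and a local verifier where each vertex accepts or rejects based only on identifiers and certificates in its closed neighborhood; all vertices accept when $G\in\mathcal{G}$ with the prover's certificates, and when $G\notin\mathcal{G}$ some vertex rejects for every certificate assignment. The local complexity of $\mathcal{G}$ is the minimum, over such schemes, of the maximum certificate length used on $n$-vertex graphs of $\mathcal{G}$. *)

From Stdlib Require Import Reals.
From mathcomp Require Import all_boot.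
Set Implicit Arguments. Unset Strict Implicit. Unset Printing Implicit Defensive.

Definition simple_graph (n : nat) (e : rel 'I_n) : Prop :=
  symmetric e /\ irreflexive e.

Definition connected_graph (n : nat) (e : rel 'I_n) : Prop :=
  forall x y : 'I_n, connect e x y.

Definition sqdist (p q : R * R) : R :=
  (Rplus (Rmult (Rminus (fst p) (fst q)) (Rminus (fst p) (fst q))) (Rmult (Rminus (snd p) (snd q)) (Rminus (snd p) (snd q)))).

Definition unit_distance_graph (n : nat) (e : rel 'I_n) : Prop :=
  exists p : 'I_n -> R * R,
    injective p /\ forall x y : 'I_n, e x y <-> sqdist (p x) (p y) = R1.

(* Identifier assignment: distinct identifiers in {1, ..., n^k}
   (k is the fixed exponent of the polynomial range poly(n)). *)
Definition valid_ids (k n : nat) (id : 'I_n -> nat) : Prop :=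
  injective id /\ forall v : 'I_n, 1 <= id v <= n ^ k.

Definition cert := seq bool.

(* What a vertex v sees of its (open) neighbourhood: the partial map sending the
   identifier of each neighbour of v to that neighbour's certificate (identifiers
   are distinct, so this is well defined); together with v's own identifier and
   certificate this is exactly the information of its closed neighbourhood. *)
Definition nbr_view (n : nat) (e : rel 'I_n) (id : 'I_n -> nat)
    (c : 'I_n -> cert) (v : 'I_n) : nat -> option cert :=
  fun i => match [pick u | e v u && (id u == i)] with
           | Some u => Some (c u)
           | None => None
           end.

(* A local verifier: decision of a vertex from its own identifier and certificate
   and the identifiers/certificates of its neighbours. *)
Definition verifier := nat -> cert -> (nat -> option cert) -> bool.

Definition prover := forall n : nat, rel 'I_n -> ('I_n -> nat) -> 'I_n -> cert.

Definition all_accept (V : verifier) (n : nat) (e : rel 'I_n) (id : 'I_n -> nat)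
    (c : 'I_n -> cert) : Prop :=
  forall v : 'I_n, V (id v) (c v) (nbr_view e id c v).

Definition instance (k n : nat) (e : rel 'I_n) (id : 'I_n -> nat) : Prop :=
  simple_graph e /\ connected_graph e /\ valid_ids k id.

Definition is_PLS_unit_distance (k : nat) (P : prover) (V : verifier) : Prop :=
  (forall (n : nat) (e : rel 'I_n) (id : 'I_n -> nat),
      instance k e id -> unit_distance_graph e -> all_accept V e id (P n e id))
  /\
  (forall (n : nat) (e : rel 'I_n) (id : 'I_n -> nat),
      instance k e id -> ~ unit_distance_graph e ->
      forall c : 'I_n -> cert, ~ all_accept V e id c).

From Stdlib Require Import Reals Lra Lia ZArith FunctionalExtensionality.
From mathcomp Require Import all_boot zify.
Set Implicit Arguments. Unset Strict Implicit. Unset Printing Implicit Defensive.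

(* Two two-row strips of the triangular lattice, joined at their right ends
   by a four-vertex frame, are rigid: in any unit-distance realisation, rhombus
   after rhombus, every vertex is where its lattice site says.  Column
   [n + 2 + 3 t], for [t < m], carries two teeth: the A-tooth is glued above or
   below the bottom strip according to bit [t] of a word [bA], the B-tooth
   above or below the top strip according to [bB].  All lattice edges between
   side A (bottom strip, A-teeth) and side B (top strip, B-teeth) are deleted.
   For [bA = bB] no such edge exists, so the graph is the unit-distance graph
   of its lattice sites; but if [bA t] and not [bB t], rigidity puts the two
   [t]-th teeth at distance 1 although they are not adjacent, so the crossed
   graph is not a unit-distance graph.  If every frame certificate had length
   at most [L] with [4 (L + 1) < m], two of the [2 ^ m] words would receive the
   same frame certificates, and combining side A of one honest labelling with
   side B of the other makes every vertex of a crossed graph accept.  The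
   gadget has [O(m)] vertices (a path pads it to [n]), whence certificates of
   length [Omega(n)]. *)

(* Coordinates of the triangular lattice: [(i, j)] is the point [i e1 + j e2]
   with [e1 = (1, 0)] and [e2 = (1/2, sqrt 3 / 2)]. *)
Definition tri_adj (p q : nat * nat) : bool :=
  [|| (q.1 == p.1.+1) && (q.2 == p.2), (p.1 == q.1.+1) && (q.2 == p.2),
      (q.1 == p.1) && (q.2 == p.2.+1), (q.1 == p.1) && (p.2 == q.2.+1),
      (q.1.+1 == p.1) && (q.2 == p.2.+1) | (q.1 == p.1.+1) && (q.2.+1 == p.2)].

Lemma tri_adj_sym : symmetric tri_adj.
Proof. by case=> p1 p2 [q1 q2]; rewrite /tri_adj /=; apply/idP/idP; lia. Qed.

Lemma tri_adj_irr : irreflexive tri_adj.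
Proof. by case=> p1 p2; rewrite /tri_adj /=; apply/negbTE; lia. Qed.

Section TriAdjacency.
Variables p q : nat * nat.

Lemma tri_adj_right : q.1 = p.1 + 1 -> q.2 = p.2 -> tri_adj p q.
Proof. by case: p q => [p1 p2] [q1 q2] /= h1 h2; rewrite /tri_adj /=; lia. Qed.
Lemma tri_adj_left : p.1 = q.1 + 1 -> q.2 = p.2 -> tri_adj p q.
Proof. by case: p q => [p1 p2] [q1 q2] /= h1 h2; rewrite /tri_adj /=; lia. Qed.
Lemma tri_adj_up : q.1 = p.1 -> q.2 = p.2 + 1 -> tri_adj p q.
Proof. by case: p q => [p1 p2] [q1 q2] /= h1 h2; rewrite /tri_adj /=; lia. Qed.
Lemma tri_adj_down : q.1 = p.1 -> p.2 = q.2 + 1 -> tri_adj p q.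
Proof. by case: p q => [p1 p2] [q1 q2] /= h1 h2; rewrite /tri_adj /=; lia. Qed.
Lemma tri_adj_upleft : q.1 + 1 = p.1 -> q.2 = p.2 + 1 -> tri_adj p q.
Proof. by case: p q => [p1 p2] [q1 q2] /= h1 h2; rewrite /tri_adj /=; lia. Qed.
Lemma tri_adj_downright : q.1 = p.1 + 1 -> q.2 + 1 = p.2 -> tri_adj p q.
Proof. by case: p q => [p1 p2] [q1 q2] /= h1 h2; rewrite /tri_adj /=; lia. Qed.

End TriAdjacency.

Open Scope R_scope.

Lemma plane_orthogonal_pair (b1 b2 w1 w2 v1 v2 : R) :
  (b1, b2) <> (0, 0) -> w1 * b1 + w2 * b2 = 0 -> v1 * b1 + v2 * b2 = 0 ->
  w1 * v1 + w2 * v2 = 0 -> (w1, w2) = (0, 0) \/ (v1, v2) = (0, 0).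
Proof.
move=> hb hw hv hwv.
have cross0 : w1 * v2 - w2 * v1 = 0.
  have [b1_0|b1_nz] := Req_dec b1 0.
  - have b2_nz : b2 <> 0 by move=> b2_0; apply: hb; rewrite b1_0 b2_0.
    apply: (Rmult_eq_reg_r b2) => //.
    have -> : (w1 * v2 - w2 * v1) * b2 = w1 * (v1 * b1 + v2 * b2) - v1 * (w1 * b1 + w2 * b2)
      by ring.
    by rewrite hw hv; ring.
  - apply: (Rmult_eq_reg_r b1) => //.
    have -> : (w1 * v2 - w2 * v1) * b1 = v2 * (w1 * b1 + w2 * b2) - w2 * (v1 * b1 + v2 * b2)
      by ring.
    by rewrite hw hv; ring.
(* Lagrange's identity: |w|^2 |v|^2 = (w.v)^2 + (w x v)^2 = 0. *)
have : (w1 * w1 + w2 * w2) * (v1 * v1 + v2 * v2) = 0.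
  have -> : (w1 * w1 + w2 * w2) * (v1 * v1 + v2 * v2) =
    (w1 * v1 + w2 * v2) ^ 2 + (w1 * v2 - w2 * v1) ^ 2 by ring.
  by rewrite hwv cross0; ring.
by case/Rmult_integral=> h; [left | right]; f_equal; nra.
Qed.

Lemma rhombus_opposite (a b c d : R * R) :
  sqdist c a = 1 -> sqdist c b = 1 -> sqdist d a = 1 -> sqdist d b = 1 ->
  a <> b -> c <> d -> d = (fst a + fst b - fst c, snd a + snd b - snd c).
Proof.
case: a b c d => [a1 a2] [b1 b2] [c1 c2] [d1 d2].
rewrite /sqdist /= => hca hcb hda hdb hab hcd.
have : (d1 - c1, d2 - c2) = (0, 0) \/ (d1 + c1 - a1 - b1, d2 + c2 - a2 - b2) = (0, 0).
  apply: (@plane_orthogonal_pair (b1 - a1) (b2 - a2)); try lra.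
  by case=> h1 h2; apply: hab; f_equal; lra.
case=> [[h1 h2]|[h1 h2]]; last by f_equal; lra.
by case: hcd; f_equal; lra.
Qed.

Definition tri_point (p : nat * nat) : R * R :=
  (INR p.1 + INR p.2 / 2, INR p.2 * sqrt 3 / 2).

Lemma tri_point_inj : injective tri_point.
Proof.
case=> [p1 p2] [q1 q2]; rewrite /tri_point /= => -[h1 h2].
have s3 : 0 < sqrt 3 / 2 by apply: Rdiv_lt_0_compat; [apply: sqrt_lt_R0|]; lra.
have e2 : INR p2 = INR q2.
  by apply: (Rmult_eq_reg_r (sqrt 3 / 2)); [rewrite /Rdiv -!Rmult_assoc | lra].
have e1 : INR p1 = INR q1 by rewrite e2 in h1; lra.
by rewrite (INR_eq _ _ e1) (INR_eq _ _ e2).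
Qed.

Lemma sqdist_tri_point (p q : nat * nat) :
  let x := IZR (Z.of_nat p.1 - Z.of_nat q.1) in
  let y := IZR (Z.of_nat p.2 - Z.of_nat q.2) in
  sqdist (tri_point p) (tri_point q) = x * x + x * y + y * y.
Proof.
rewrite /sqdist /tri_point /= !minus_IZR -!INR_IZR_INZ.
have s3 : sqrt 3 * sqrt 3 = 3 by apply: sqrt_sqrt; lra.
have -> : forall a b, (a * sqrt 3 / 2 - b * sqrt 3 / 2) * (a * sqrt 3 / 2 - b * sqrt 3 / 2)
    = (a - b) * (a - b) * (sqrt 3 * sqrt 3) / 4
  by move=> a b; field.
by rewrite s3; field.
Qed.

Lemma eisenstein_unit (x y : Z) : (x * x + x * y + y * y = 1)%Z ->
  (x = 1 /\ y = 0 \/ x = -1 /\ y = 0 \/ x = 0 /\ y = 1 \/ x = 0 /\ y = -1 \/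
   x = 1 /\ y = -1 \/ x = -1 /\ y = 1)%Z.
Proof.
move=> h.
have [|[|]] : (x = -1 \/ x = 0 \/ x = 1)%Z by nia.
all: have [|[|]] : (y = -1 \/ y = 0 \/ y = 1)%Z by nia.
all: move=> hy hx; subst; lia.
Qed.

Lemma tri_adj_unit (p q : nat * nat) :
  tri_adj p q <-> sqdist (tri_point p) (tri_point q) = R1.
Proof.
rewrite sqdist_tri_point -!mult_IZR -!plus_IZR; change R1 with (IZR 1).
case: p q => [p1 p2] [q1 q2]; rewrite /tri_adj /=; split.
- by move=> h; congr IZR; lia.
- by move=> /eq_IZR /eisenstein_unit; lia.
Qed.

Definition pdiff (a b : R * R) : R * R := (fst a - fst b, snd a - snd b).

Definition frame_point (O U W : R * R) (x y : R) : R * R :=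
  (fst O + x * fst U + y * fst W, snd O + x * snd U + y * snd W).

Definition offset (a b : nat) : R := INR a - INR b.

Lemma offset_diag a : offset a a = 0.
Proof. by rewrite /offset Rminus_diag. Qed.

Lemma offset_pred a : (0 < a)%N -> offset a.-1 a = -1.
Proof. by case: a => // a _; rewrite /offset S_INR /=; lra. Qed.

Lemma offset_succ a k : offset a.+1 k = offset a k + 1.
Proof. by rewrite /offset S_INR; lra. Qed.

Lemma offset_add (a b c d k : nat) : (d + c = a + b)%N ->
  offset d k = offset a k + offset b k - offset c k.
Proof. by move/(f_equal INR); rewrite !plus_INR /offset; lra. Qed.

Lemma frame_point_rhombus O U W (a b c : R * R) xa ya xb yb xc yc :
  a = frame_point O U W xa ya -> b = frame_point O U W xb yb ->
  c = frame_point O U W xc yc ->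
  (fst a + fst b - fst c, snd a + snd b - snd c)
    = frame_point O U W (xa + xb - xc) (ya + yb - yc).
Proof. by move=> -> -> ->; rewrite /frame_point /=; f_equal; ring. Qed.

Lemma sqdist_frame_point_succ O U (a b : R * R) x y :
  sqdist (frame_point O U (pdiff a b) x (y + 1))
         (frame_point O U (pdiff a b) x y) = sqdist a b.
Proof. by rewrite /sqdist /frame_point /pdiff /=; ring. Qed.

Lemma frame_point_origin (O U W : R * R) : O = frame_point O U W 0 0.
Proof. by case: O => a b; rewrite /frame_point /=; f_equal; ring. Qed.

Lemma frame_point_U (O Q W : R * R) : Q = frame_point O (pdiff O Q) W (-1) 0.
Proof. by case: O Q => a b [c d]; rewrite /frame_point /pdiff /=; f_equal; ring. Qed.

Lemma frame_point_W (O Q U : R * R) : Q = frame_point O U (pdiff O Q) 0 (-1).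
Proof. by case: O Q => a b [c d]; rewrite /frame_point /pdiff /=; f_equal; ring. Qed.

Close Scope R_scope.

(* [zigzag] swaps [2 k] and [2 k + 1]; a strip is swept column by column,
   and every four consecutive vertices of the sweep form a rhombus.  Indices
   are written [2 * k + r], even for [r = 0], so that the [_split] lemmas on
   sites below apply syntactically. *)
Definition zigzag j := j + 1 - 2 * (j %% 2).

Lemma zigzagK : involutive zigzag.
Proof. by move=> j; rewrite /zigzag; lia. Qed.

Lemma zigzag_window j : exists k,
  j = 2 * k /\ (zigzag j, zigzag j.+1, zigzag j.+2, zigzag j.+3)
                = (2 * k + 1, 2 * k + 0, 2 * k.+1 + 1, 2 * k.+1 + 0)
  \/ j = 2 * k + 1 /\ (zigzag j, zigzag j.+1, zigzag j.+2, zigzag j.+3)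
                = (2 * k + 0, 2 * k.+1 + 1, 2 * k.+1 + 0, 2 * k.+2 + 1).
Proof.
exists (j %/ 2); rewrite /zigzag.
have [ev|od] : j = 2 * (j %/ 2) \/ j = 2 * (j %/ 2) + 1 by lia.
- by left; split=> //; congr (_, _, _, _); lia.
- by right; split=> //; congr (_, _, _, _); lia.
Qed.

Section Gadget.
Variables n m : nat.

(* Vertex [v < n] is placed at the lattice site [(col v, row bA bB v)]:
   - [v < strip]: bottom strip, rows 1 and 2, columns [n] to [right_col];
   - the next four vertices: the frame, rows 3 and 4, columns [right_col - 1]
     and [right_col];
   - then the top strip, rows 5 and 6, columns [n] to [right_col];
   - [teeth + t] for [t < m]: A-tooth at column [n + 2 + 3 t], just above the
     bottom strip (row 3) if [bA t] and just below it (row 0) otherwise;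
   - [teeth + m + t]: B-tooth at the same column, just above the top strip
     (row 7) if [bB t] and just below it (row 4) otherwise;
   - the remaining vertices: a path in row 1 leftwards from column [n - 1]. *)
Definition span := 3 * m + 2.
Definition strip := 2 * span + 4.
Definition teeth := 2 * strip + 4.
Definition right_col := n + span + 1.

Definition col (v : nat) : nat :=
  if v < strip then right_col - v %/ 2
  else if v < strip + 4 then n + span + (v - strip) %% 2
  else if v < teeth then right_col - (v - strip - 4) %/ 2
  else if v < teeth + m then n + 2 + 3 * (v - teeth)
  else if v < teeth + 2 * m then n + 2 + 3 * (v - teeth - m)
  else n - 1 - (v - teeth - 2 * m).

Definition row (bA bB : nat -> bool) (v : nat) : nat :=
  if v < strip then 1 + v %% 2
  else if v < strip + 4 then 3 + (v - strip) %/ 2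
  else if v < teeth then 5 + (v - strip - 4) %% 2
  else if v < teeth + m then 3 * bA (v - teeth)
  else if v < teeth + 2 * m then 4 + 3 * bB (v - teeth - m)
  else 1.

Definition site bA bB v := (col v, row bA bB v).

Variant site_spec (bA bB : nat -> bool) (v : nat) : nat -> nat -> Type :=
 | SiteBottom of v < strip :
     site_spec bA bB v (right_col - v %/ 2) (1 + v %% 2)
 | SiteFrame of strip <= v < strip + 4 :
     site_spec bA bB v (n + span + (v - strip) %% 2) (3 + (v - strip) %/ 2)
 | SiteTop of strip + 4 <= v < teeth :
     site_spec bA bB v (right_col - (v - strip - 4) %/ 2) (5 + (v - strip - 4) %% 2)
 | SiteToothA of teeth <= v < teeth + m :
     site_spec bA bB v (n + 2 + 3 * (v - teeth)) (3 * bA (v - teeth))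
 | SiteToothB of teeth + m <= v < teeth + 2 * m :
     site_spec bA bB v (n + 2 + 3 * (v - teeth - m)) (4 + 3 * bB (v - teeth - m))
 | SiteTail of teeth + 2 * m <= v :
     site_spec bA bB v (n - 1 - (v - teeth - 2 * m)) 1.

Lemma siteP bA bB v : site_spec bA bB v (col v) (row bA bB v).
Proof.
rewrite /col /row.
case: ifP => h1; first by constructor.
case: ifP => h2; first by constructor; lia.
case: ifP => h3; first by constructor; lia.
case: ifP => h4; first by constructor; lia.
case: ifP => h5; first by constructor; lia.
by constructor; lia.
Qed.

Ltac layout_lia := unfold teeth, right_col, strip, span in *; lia.

Section Regions.
Variables (bA bB : nat -> bool) (v : nat).

Lemma col_bottom : v < strip -> col v = right_col - v %/ 2.
Proof. by case: (siteP xpred0 xpred0 v) => h; layout_lia. Qed.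
Lemma col_frame : strip <= v < strip + 4 -> col v = n + span + (v - strip) %% 2.
Proof. by case: (siteP xpred0 xpred0 v) => h; layout_lia. Qed.
Lemma col_top : strip + 4 <= v < teeth -> col v = right_col - (v - strip - 4) %/ 2.
Proof. by case: (siteP xpred0 xpred0 v) => h; layout_lia. Qed.
Lemma col_toothA : teeth <= v < teeth + m -> col v = n + 2 + 3 * (v - teeth).
Proof. by case: (siteP xpred0 xpred0 v) => h; layout_lia. Qed.
Lemma col_toothB : teeth + m <= v < teeth + 2 * m -> col v = n + 2 + 3 * (v - teeth - m).
Proof. by case: (siteP xpred0 xpred0 v) => h; layout_lia. Qed.
Lemma col_tail : teeth + 2 * m <= v -> col v = n - 1 - (v - teeth - 2 * m).
Proof. by case: (siteP xpred0 xpred0 v) => h; layout_lia. Qed.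

Lemma row_bottom : v < strip -> row bA bB v = 1 + v %% 2.
Proof. by case: (siteP bA bB v) => h; layout_lia. Qed.
Lemma row_frame : strip <= v < strip + 4 -> row bA bB v = 3 + (v - strip) %/ 2.
Proof. by case: (siteP bA bB v) => h; layout_lia. Qed.
Lemma row_top : strip + 4 <= v < teeth -> row bA bB v = 5 + (v - strip - 4) %% 2.
Proof. by case: (siteP bA bB v) => h; layout_lia. Qed.
Lemma row_toothA : teeth <= v < teeth + m -> row bA bB v = 3 * bA (v - teeth).
Proof. by case: (siteP bA bB v) => h; layout_lia. Qed.
Lemma row_toothB : teeth + m <= v < teeth + 2 * m -> row bA bB v = 4 + 3 * bB (v - teeth - m).
Proof. by case: (siteP bA bB v) => h; layout_lia. Qed.
Lemma row_tail : teeth + 2 * m <= v -> row bA bB v = 1.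
Proof. by case: (siteP bA bB v) => h; layout_lia. Qed.

End Regions.

Lemma col_bottom_split k r : r < 2 -> 2 * k + r < strip -> col (2 * k + r) = right_col - k.
Proof. by move=> hr hv; rewrite col_bottom // [2 * k]mulnC divnMDl // divn_small // addn0. Qed.

Lemma row_bottom_split bA bB k r : r < 2 -> 2 * k + r < strip -> row bA bB (2 * k + r) = 1 + r.
Proof. by move=> hr hv; rewrite row_bottom // [2 * k]mulnC modnMDl modn_small. Qed.

Lemma col_top_split k r : r < 2 -> strip + 4 + (2 * k + r) < teeth ->
  col (strip + 4 + (2 * k + r)) = right_col - k.
Proof.
move=> hr hv; rewrite col_top; last by layout_lia.
by rewrite -addnA !addKn [2 * k]mulnC divnMDl // divn_small // addn0.
Qed.

Lemma row_top_split bA bB k r : r < 2 -> strip + 4 + (2 * k + r) < teeth ->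
  row bA bB (strip + 4 + (2 * k + r)) = 5 + r.
Proof.
move=> hr hv; rewrite row_top; last by layout_lia.
by rewrite -addnA !addKn [2 * k]mulnC modnMDl modn_small.
Qed.

Ltac simpl_site :=
  repeat match goal with
  | |- context [col (strip + 4 + (2 * ?k + ?r))] =>
      rewrite (@col_top_split k r); [|layout_lia|layout_lia]
  | |- context [row ?bA ?bB (strip + 4 + (2 * ?k + ?r))] =>
      rewrite (@row_top_split bA bB k r); [|layout_lia|layout_lia]
  | |- context [col (2 * ?k + ?r)] =>
      rewrite (@col_bottom_split k r); [|layout_lia|layout_lia]
  | |- context [row ?bA ?bB (2 * ?k + ?r)] =>
      rewrite (@row_bottom_split bA bB k r); [|layout_lia|layout_lia]
  | |- context [col ?v] =>
      first [ rewrite (@col_bottom v); [|layout_lia]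
            | rewrite (@col_frame v); [|layout_lia]
            | rewrite (@col_top v); [|layout_lia]
            | rewrite (@col_toothA v); [|layout_lia]
            | rewrite (@col_toothB v); [|layout_lia]
            | rewrite (@col_tail v); [|layout_lia] ]
  | |- context [row ?bA ?bB ?v] =>
      first [ rewrite (@row_bottom bA bB v); [|layout_lia]
            | rewrite (@row_frame bA bB v); [|layout_lia]
            | rewrite (@row_top bA bB v); [|layout_lia]
            | rewrite (@row_toothA bA bB v); [|layout_lia]
            | rewrite (@row_toothB bA bB v); [|layout_lia]
            | rewrite (@row_tail bA bB v); [|layout_lia] ]
  end.

(* Side A: bottom strip, A-teeth and tail; side B: upper frame row, top strip
   and B-teeth.  The lower frame row belongs to neither side. *)
Definition sideA v := (v < strip) || (teeth <= v < teeth + m) || (teeth + 2 * m <= v).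
Definition sideB v := (strip + 2 <= v < teeth) || (teeth + m <= v < teeth + 2 * m).
Definition across u v := sideA u && sideB v || sideB u && sideA v.

Lemma sideA_sideB v : sideA v -> ~~ sideB v.
Proof. by rewrite /sideA /sideB; layout_lia. Qed.

Lemma neither_side v : ~~ sideA v -> ~~ sideB v -> strip <= v < strip + 2.
Proof. by rewrite /sideA /sideB; layout_lia. Qed.

Definition adj bA bB u v := ~~ across u v && tri_adj (site bA bB u) (site bA bB v).

Lemma across_sym u v : across u v = across v u.
Proof. by rewrite /across orbC [sideA v && _]andbC [sideB v && _]andbC. Qed.

Lemma adj_sym bA bB u v : adj bA bB u v = adj bA bB v u.
Proof. by rewrite /adj across_sym tri_adj_sym. Qed.

Lemma adj_irr bA bB u : adj bA bB u u = false.
Proof. by rewrite /adj tri_adj_irr andbF. Qed.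

Lemma site_indep_bitsA bA bA' bB u : ~~ (teeth <= u < teeth + m) ->
  site bA bB u = site bA' bB u.
Proof.
rewrite /site => h; congr pair.
by case: (siteP bA bB u) h => hu h; case: (siteP bA' bB u) h => hu' h //; layout_lia.
Qed.

Lemma site_indep_bitsB bA bB bB' u : ~~ (teeth + m <= u < teeth + 2 * m) ->
  site bA bB u = site bA bB' u.
Proof.
rewrite /site => h; congr pair.
by case: (siteP bA bB u) h => hu h; case: (siteP bA bB' u) h => hu' h //; layout_lia.
Qed.

Lemma adj_sideA bA bB v u : sideA v -> adj bA bB v u = adj bA bA v u.
Proof.
move=> hA; rewrite /adj; case hB: (sideB u); first by rewrite /across hA hB.
rewrite (@site_indep_bitsB bA bB bA u) ?(@site_indep_bitsB bA bB bA v) //.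
  by move: hA; rewrite /sideA; layout_lia.
by move: hB; rewrite /sideB => /negbT; layout_lia.
Qed.

Lemma adj_sideB bA bB v u : sideB v -> adj bA bB v u = adj bB bB v u.
Proof.
move=> hB; rewrite /adj; case hA: (sideA u); first by rewrite /across hA hB orbT.
rewrite (@site_indep_bitsA bA bB bB u) ?(@site_indep_bitsA bA bB bB v) //.
  by move: hB; rewrite /sideB; layout_lia.
by move: hA; rewrite /sideA => /negbT; layout_lia.
Qed.

Lemma frame_nbr_sideB bA bB v u : strip <= v < strip + 2 -> sideB u ->
  tri_adj (site bA bB v) (site bA bB u) -> u = strip + 2 \/ u = strip + 3.
Proof.
move=> hv; rewrite /site /sideB (@col_frame v) ?(@row_frame bA bB v); try layout_lia.
by case: (siteP bA bB u) => hu hB; rewrite /tri_adj /=; layout_lia.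
Qed.

Lemma adj_frame bA bB v u : strip <= v < strip + 2 -> adj bA bB v u = adj bA bA v u.
Proof.
move=> hv; rewrite /adj.
case hT: (teeth + m <= u < teeth + 2 * m); last first.
  by rewrite !(@site_indep_bitsB bA bB bA) ?hT //; layout_lia.
have hB : sideB u by rewrite /sideB hT orbT.
have far : forall b, tri_adj (site bA b v) (site bA b u) = false.
  by move=> b; apply/negP => /(frame_nbr_sideB hv hB) []; layout_lia.
by rewrite !far.
Qed.

Lemma tri_adj_across b u v : sideA u -> sideB v -> tri_adj (site b b u) (site b b v) = false.
Proof.
rewrite /sideA /sideB /site => hA hB; apply/negbTE.
case: (siteP b b u) hA hB => hu' hA hB; case: (siteP b b v) hA hB => hv' hA hB;
  rewrite /tri_adj /=; try layout_lia.
(* an A-tooth and a B-tooth share their column only when they have the same index *)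
by case: (eqVneq (u - teeth) (v - teeth - m)) => [->|]; layout_lia.
Qed.

Ltac tri_adj_tac :=
  first [ apply: tri_adj_right => /=; layout_lia | apply: tri_adj_left => /=; layout_lia
        | apply: tri_adj_up => /=; layout_lia | apply: tri_adj_down => /=; layout_lia
        | apply: tri_adj_upleft => /=; layout_lia | apply: tri_adj_downright => /=; layout_lia ].
Ltac adj_tac := rewrite /adj; apply/andP; split;
  [ rewrite /across /sideA /sideB; layout_lia | rewrite /site; simpl_site; tri_adj_tac ].

Section Bounded.
Hypothesis hn : 14 * m + 20 <= n.

Lemma site_inj bA bB u v : u < n -> v < n -> site bA bB u = site bA bB v -> u = v.
Proof.
move=> hu hv [].
by case: (siteP bA bB u) => hu'; case: (siteP bA bB v) => hv' e1 e2; layout_lia.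
Qed.

Definition parent (bA bB : nat -> bool) v :=
  if v < strip then (if v %% 2 == 1 then v.-1 else v - 2)
  else if v < strip + 4 then (if v == strip then 3 else v.-1)
  else if v < teeth then
    (if v == strip + 4 then strip + 3
     else if (v - strip - 4) %% 2 == 1 then v.-1 else v - 2)
  else if v < teeth + m then 2 * (span - 1 - 3 * (v - teeth)) + bA (v - teeth)
  else if v < teeth + 2 * m then
    strip + 4 + 2 * (span - 1 - 3 * (v - teeth - m)) + bB (v - teeth - m)
  else if v == teeth + 2 * m then 2 * span + 2 else v.-1.

Lemma parent_adj bA bB v : 0 < v < n ->
  parent bA bB v < v /\ adj bA bB (parent bA bB v) v.
Proof.
move=> hv; rewrite /parent; repeat case: ifP => ?; (split; [layout_lia | try adj_tac]).
- have : v = strip + 1 \/ v = strip + 2 \/ v = strip + 3 by layout_lia.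
  by case=> [->|[->|->]]; adj_tac.
- rewrite /adj /site; simpl_site; apply/andP; split.
    by rewrite /across /sideA /sideB; layout_lia.
  by case: (bA (v - teeth)); tri_adj_tac.
- rewrite /adj /site; simpl_site; apply/andP; split.
    by rewrite /across /sideA /sideB; layout_lia.
  by case: (bB (v - teeth - m)); tri_adj_tac.
Qed.

Lemma n_gt0 : 0 < n.
Proof. layout_lia. Qed.

Definition vtx (v : nat) : 'I_n := insubd (Ordinal n_gt0) v.

Lemma vtxK v : v < n -> val (vtx v) = v.
Proof. by move=> h; rewrite /vtx val_insubd h. Qed.

Lemma val_vtx (x : 'I_n) : vtx (val x) = x.
Proof. by apply: val_inj; rewrite vtxK ?ltn_ord. Qed.

Definition gadget bA bB : rel 'I_n := fun u v => adj bA bB u v.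

Lemma gadget_simple bA bB : simple_graph (gadget bA bB).
Proof. by split=> [u v | u]; [exact: adj_sym | exact: adj_irr]. Qed.

Lemma gadget_connected bA bB : connected_graph (gadget bA bB).
Proof.
have from0 v : v < n -> connect (gadget bA bB) (vtx 0) (vtx v).
  elim/ltn_ind: v => -[_ _|v IH hv]; first exact: connect0.
  have [lt_pv adj_pv] := @parent_adj bA bB v.+1 (ltac:(lia)).
  apply: connect_trans (IH _ lt_pv (ltn_trans lt_pv hv)) (connect1 _).
  by rewrite /gadget !vtxK // (ltn_trans lt_pv hv).
move=> x y; rewrite -(val_vtx x) -(val_vtx y).
apply: connect_trans (from0 _ (ltn_ord y)).
by rewrite (sym_connect_sym (gadget_simple bA bB).1) from0 ?ltn_ord.
Qed.

Lemma gadget_unit_distance b : unit_distance_graph (gadget b b).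
Proof.
exists (fun v : 'I_n => tri_point (site b b v)); split.
- by move=> u v /tri_point_inj /(site_inj (ltn_ord u) (ltn_ord v)) /val_inj.
- move=> u v; rewrite /gadget /adj -tri_adj_unit.
  case hAB: (across u v) => //=; split=> // uv_adj; exfalso.
  case/orP: hAB => /andP [hu hv]; move: uv_adj.
  + by rewrite tri_adj_across.
  + by rewrite tri_adj_sym tri_adj_across.
Qed.

Section Crossed.
Variables (bA bB : nat -> bool) (p : 'I_n -> R * R).
Hypothesis p_inj : injective p.
Hypothesis p_unit : forall x y, gadget bA bB x y <-> sqdist (p x) (p y) = R1.

Let place v := p (vtx v).

Lemma place_unit u v : u < n -> v < n -> adj bA bB u v -> sqdist (place u) (place v) = R1.
Proof. by move=> hu hv huv; apply/p_unit; rewrite /gadget !vtxK. Qed.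

Lemma place_neq u v : u < n -> v < n -> u <> v -> place u <> place v.
Proof. by move=> hu hv huv /p_inj /(f_equal val); rewrite !vtxK. Qed.

(* [v] is where its lattice site says, in the affine frame given by the points
   of vertices 1, 0 and 3, whose sites are [(right_col, 2)], [(right_col, 1)]
   and [(right_col - 1, 2)]. *)
Definition placed v :=
  place v = frame_point (place 1) (pdiff (place 1) (place 3)) (pdiff (place 1) (place 0))
              (offset (col v) right_col) (offset (row bA bB v) 2).

Definition rhombus_at c a b d :=
  [/\ [&& adj bA bB c a, adj bA bB c b, adj bA bB d a & adj bA bB d b],
      a != b, c != d, col d + col c = col a + col b
    & row bA bB d + row bA bB c = row bA bB a + row bA bB b].

Lemma placed_rhombus a b c d : a < n -> b < n -> c < n -> d < n ->
  placed a -> placed b -> placed c -> rhombus_at c a b d -> placed d.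
Proof.
move=> ha hb hc hd pa pb pc [/and4P [ca cb da db] /eqP ab /eqP cd hcol hrow].
rewrite /placed (rhombus_opposite (place_unit hc ha ca) (place_unit hc hb cb)
  (place_unit hd ha da) (place_unit hd hb db) (place_neq ha hb ab) (place_neq hc hd cd)).
by rewrite (frame_point_rhombus pa pb pc) -(offset_add _ hcol) -(offset_add _ hrow).
Qed.

Lemma placed_chain (t : nat -> nat) len : (forall j, j < len -> t j < n) ->
  placed (t 0) -> placed (t 1) -> placed (t 2) ->
  (forall j, j + 3 < len -> rhombus_at (t j) (t j.+1) (t j.+2) (t j.+3)) ->
  forall j, j < len -> placed (t j).
Proof.
move=> ht p0 p1 p2 hr j; elim/ltn_ind: j => -[|[|[|j]]] IH hj //.
apply: (placed_rhombus _ _ _ _ (IH _ _ _) (IH _ _ _) (IH _ _ _) (hr j _)); try lia.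
all: by apply: ht; lia.
Qed.

Lemma placed_anchors : [/\ placed 0, placed 1 & placed 3].
Proof.
rewrite /placed !col_bottom ?(@row_bottom bA bB) //; try layout_lia.
have -> : right_col - 3 %/ 2 = right_col.-1 by rewrite subn1.
have -> : 1 + 0 %% 2 = 2.-1 by [].
rewrite !subn0 !offset_diag !offset_pred //; last by layout_lia.
split; [exact: frame_point_W | exact: frame_point_origin | exact: frame_point_U].
Qed.

Ltac rhombus_tac := unfold rhombus_at, adj, site; split;
  [ apply/and4P; split; (apply/andP; split;
      [ rewrite /across /sideA /sideB; layout_lia | simpl_site; tri_adj_tac ])
  | layout_lia | layout_lia | simpl_site; layout_lia | simpl_site; layout_lia ].

Lemma placed_bottom v : v < strip -> placed v.
Proof.
have [p0 p1 p3] := placed_anchors.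
move=> hv; rewrite -(zigzagK v); apply: (@placed_chain zigzag strip) => //.
- by move=> j hj; rewrite /zigzag; layout_lia.
- move=> j; have [k [[-> E] | [-> E]]] := zigzag_window j;
    by case: E => -> -> -> -> hj; rhombus_tac.
- by rewrite /zigzag; layout_lia.
Qed.

Lemma placed_top_anchors : [/\ placed (strip + 4), placed (strip + 5) & placed (strip + 7)].
Proof.
pose walk := [:: 2; 0; 3; 1; strip; strip + 1; strip + 2; strip + 3;
                 strip + 6; strip + 4; strip + 7; strip + 5].
have placed_walk : forall j, j < 12 -> placed (nth 0 walk j).
  apply: placed_chain.
  - by move=> [|[|[|[|[|[|[|[|[|[|[|[|j]]]]]]]]]]]] hj; rewrite /walk /=; layout_lia.
  1-3: by apply: placed_bottom; rewrite /walk /=; layout_lia.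
  - by move=> [|[|[|[|[|[|[|[|[|j]]]]]]]]] hj; rewrite /walk /=; rhombus_tac.
by split; [exact: (placed_walk 9) | exact: (placed_walk 11) | exact: (placed_walk 10)].
Qed.

Lemma placed_top v : strip + 4 <= v < teeth -> placed v.
Proof.
have [p4 p5 p7] := placed_top_anchors.
move=> hv; have -> : v = strip + 4 + zigzag (zigzag (v - strip - 4)) by rewrite zigzagK; layout_lia.
apply: (@placed_chain (fun j => strip + 4 + zigzag j) strip).
- by move=> j hj; rewrite /zigzag; layout_lia.
- by rewrite -addnA.
- by rewrite addn0.
- by rewrite -addnA.
- move=> j; have [k [[-> E] | [-> E]]] := zigzag_window j;
    by case: E => -> -> -> -> hj; rhombus_tac.
- by rewrite /zigzag; layout_lia.
Qed.

Variable i : nat.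
Hypotheses (hi : i < m) (hbA : bA i) (hbB : ~~ bB i).

Lemma row_crossed_teeth : row bA bB (teeth + i) = 3 /\ row bA bB (teeth + m + i) = 4.
Proof.
rewrite (@row_toothA bA bB (teeth + i)) ?(@row_toothB bA bB (teeth + m + i)); try layout_lia.
have -> : teeth + m + i - teeth - m = i by layout_lia.
by rewrite addKn hbA (negbTE hbB).
Qed.

Lemma placed_toothA : placed (teeth + i).
Proof.
have [rowA _] := row_crossed_teeth.
apply: (@placed_rhombus (2 * (span - 1 - 3 * i) + 1) (2 * (span - 2 - 3 * i) + 1)
  (2 * (span - 2 - 3 * i) + 0)); try layout_lia.
1-3: by apply: placed_bottom; layout_lia.
by unfold rhombus_at, adj, site; rewrite rowA; rhombus_tac.
Qed.

Lemma placed_toothB : placed (teeth + m + i).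
Proof.
have [_ rowB] := row_crossed_teeth.
apply: (@placed_rhombus (strip + 4 + (2 * (span - 1 - 3 * i) + 0))
  (strip + 4 + (2 * (span - 3 * i) + 0)) (strip + 4 + (2 * (span - 3 * i) + 1)));
  try layout_lia.
1-3: by apply: placed_top; layout_lia.
by unfold rhombus_at, adj, site; rewrite rowB; rhombus_tac.
Qed.

(* The two crossed teeth land on neighbouring sites of one column, hence at
   the distance of the anchors 1 and 0. *)
Lemma crossed_teeth_unit : sqdist (place (teeth + m + i)) (place (teeth + i)) = R1.
Proof.
have [rowA rowB] := row_crossed_teeth.
rewrite placed_toothB placed_toothA.
have -> : col (teeth + m + i) = col (teeth + i) by simpl_site; layout_lia.
rewrite rowA rowB [offset 4 2]offset_succ sqdist_frame_point_succ.
by apply: place_unit; try layout_lia; adj_tac.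
Qed.

End Crossed.

Lemma gadget_crossed_not_unit_distance (bA bB : nat -> bool) i : i < m -> bA i -> ~~ bB i ->
  ~ unit_distance_graph (gadget bA bB).
Proof.
move=> hi hA hB [p [p_inj p_unit]].
move: (crossed_teeth_unit p_inj p_unit hi hA hB) => /p_unit.
rewrite /gadget /adj !vtxK; try layout_lia.
have -> // : across (teeth + m + i) (teeth + i).
by rewrite /across /sideA /sideB; layout_lia.
Qed.

End Bounded.
End Gadget.

Lemma nbr_view_eq n (e e' : rel 'I_n) (id : 'I_n -> nat) (c c' : 'I_n -> cert) v :
  (forall u, e v u = e' v u) -> (forall u, e v u -> c u = c' u) ->
  nbr_view e id c v = nbr_view e' id c' v.
Proof.
move=> he hc; apply: functional_extensionality => i; rewrite /nbr_view.
rewrite (eq_pick (_ : [pred u | e v u && (id u == i)] =1 [pred u | e' v u && (id u == i)])).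
  by case: pickP => [u /andP [hu _]|_] //; rewrite hc // he.
by move=> u /=; rewrite he.
Qed.

Fixpoint word_code (s : seq bool) : nat :=
  if s is b :: s' then 1 + b + 2 * word_code s' else 0.

Lemma word_code_lt s : (word_code s).+1 < 2 ^ (size s).+1.
Proof.
elim: s => [|b s IH] //=; rewrite expnS.
by case: b; lia.
Qed.

Lemma word_code_inj : injective word_code.
Proof.
elim=> [|b s IH] [|b' s'] //=; try lia.
move=> h; have eq_b : b = b' by case: b b' h => [] [] /=; lia.
by rewrite eq_b (IH s') //; lia.
Qed.

Lemma short_words_collide (T : finType) (r L : nat) (w : T -> 'I_r -> cert) :
  2 ^ (L.+1 * r) < #|T| -> (forall t j, size (w t j) <= L) ->
  exists t1 t2, t1 != t2 /\ forall j, w t1 j = w t2 j.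
Proof.
move=> card_T short.
have code_lt t j : word_code (w t j) < 2 ^ L.+1.
  by apply: ltn_trans (ltnSn _) (leq_trans (word_code_lt _) _); rewrite leq_exp2l // ltnS.
pose f t := [ffun j => Ordinal (code_lt t j)].
have /injectivePn [t1 [t2 neq_t eq_f]] : ~~ injectiveb f.
  apply/negP => /injectiveP/leq_card.
  by rewrite card_ffun !card_ord -expnM leqNgt card_T.
exists t1, t2; split=> // j; apply: word_code_inj.
by have := congr1 (fun g : {ffun 'I_r -> 'I_(2 ^ L.+1)} => val (g j)) eq_f; rewrite /= !ffunE.
Qed.

Definition seq_ids n : 'I_n -> nat := fun v => val v + 1.

Lemma seq_ids_valid k n : 0 < k -> valid_ids k (@seq_ids n).
Proof.
move=> hk; split=> [u v /addIn /val_inj // | v]; rewrite /seq_ids addn1 /=.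
have n_gt0 : 0 < n := leq_ltn_trans (leq0n v) (ltn_ord v).
apply: leq_trans (ltn_ord v) _; case: k hk => // k _.
by rewrite expnS leq_pmulr // expn_gt0 n_gt0.
Qed.

Section Crossing.
Variables (n m : nat) (V : verifier) (bA bB : nat -> bool) (cA cB : 'I_n -> cert).
Hypothesis accA : all_accept V (gadget m bA bA) (@seq_ids n) cA.
Hypothesis accB : all_accept V (gadget m bB bB) (@seq_ids n) cB.
Hypothesis frame_eq : forall u : 'I_n, strip m <= u < strip m + 4 -> cA u = cB u.

(* Every vertex sees its neighbourhood in one of the two honest copies: the
   sides only meet at the frame, whose certificates agree. *)
Lemma crossed_all_accept :
  all_accept V (gadget m bA bB) (@seq_ids n) (fun u => if sideB m u then cB u else cA u).
Proof.
move=> v /=; case hA: (sideA m v).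
  rewrite (negbTE (sideA_sideB hA)) (@nbr_view_eq _ _ (gadget m bA bA) _ _ cA); first exact: accA.
  - by move=> u; apply: adj_sideA.
  - move=> u /= uv; case hBu: (sideB m u) => //; move: uv.
    by rewrite /gadget /adj /across hA hBu.
case hB: (sideB m v).
  rewrite (@nbr_view_eq _ _ (gadget m bB bB) _ _ cB); first exact: accB.
  - by move=> u; apply: adj_sideB.
  - move=> u /= uv; case hBu: (sideB m u) => //.
    have hAu : sideA m u = false.
      by apply/negbTE/negP => hAu; move: uv; rewrite /gadget /adj /across hAu hB orbT.
    by apply: frame_eq; move: (neither_side (negbT hAu) (negbT hBu)); lia.
have hv := neither_side (negbT hA) (negbT hB).
rewrite (@nbr_view_eq _ _ (gadget m bA bA) _ _ cA); first exact: accA.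
- by move=> u; apply: adj_frame.
- move=> u /= /andP [_ uv]; case hBu: (sideB m u) => //.
  by apply/esym/frame_eq; have [->|->] := frame_nbr_sideB hv hBu uv; lia.
Qed.

End Crossing.

Section LowerBound.
Variables (k n m : nat) (P : prover) (V : verifier).
Hypotheses (hk : 0 < k) (hn : 14 * m + 20 <= n) (pls : is_PLS_unit_distance k P V).

Lemma gadget_instance bA bB : instance k (gadget m bA bB) (@seq_ids n).
Proof. by split; [exact: gadget_simple | split; [exact: gadget_connected | exact: seq_ids_valid]]. Qed.

Let frame_cert b (j : 'I_4) := @P n (gadget m b b) (@seq_ids n) (vtx hn (strip m + j)).

Lemma frame_certs_differ (bA bB : nat -> bool) i : i < m -> bA i -> ~~ bB i ->
  ~ (forall j, frame_cert bA j = frame_cert bB j).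
Proof.
move=> hi hA hB same; have [complete sound] := pls.
have accA := complete n _ _ (gadget_instance bA bA) (gadget_unit_distance hn bA).
have accB := complete n _ _ (gadget_instance bB bB) (gadget_unit_distance hn bB).
apply: (sound n _ _ (gadget_instance bA bB) (gadget_crossed_not_unit_distance hn hi hA hB)).
apply: (crossed_all_accept accA accB) => u hu.
have lt_u : u - strip m < 4 by lia.
have := same (Ordinal lt_u); rewrite /frame_cert /=.
have -> : strip m + (u - strip m) = u by lia.
by rewrite val_vtx.
Qed.

Lemma long_frame_certificate L : 4 * L.+1 < m ->
  exists (b : m.-tuple bool) (j : 'I_4), L < size (frame_cert (nth false b) j).
Proof.
move=> hL.
case: (boolP [exists b : m.-tuple bool, exists j, L < size (frame_cert (nth false b) j)]).
  by case/existsP=> b /existsP [j long]; exists b, j.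
move=> /existsPn none_long.
have short (b : m.-tuple bool) j : size (frame_cert (nth false b) j) <= L.
  by move/existsPn/(_ j): (none_long b); rewrite -leqNgt.
have card_T : 2 ^ (L.+1 * 4) < #|{: m.-tuple bool}|.
  by rewrite card_tuple card_bool ltn_exp2l // mulnC.
have [t1 [t2 [neq_t same]]] := short_words_collide card_T short.
have /existsP [i diff] : [exists i : 'I_m, tnth t1 i != tnth t2 i].
  apply: contraR neq_t => /existsPn same_bits; apply/eqP/eq_from_tnth => i.
  exact/eqP/negbNE.
rewrite !(tnth_nth false) in diff; exfalso.
case h1: (nth false t1 i) in diff.
- by apply: (frame_certs_differ (ltn_ord i) h1 diff).
- by apply: (frame_certs_differ (ltn_ord i) (negbNE diff) (negbT h1)) => j; rewrite same.
Qed.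

End LowerBound.

Theorem theorem5p4 :
  forall k : nat, (1 <= k)%N ->
  exists c : R, Rlt R0 c /\
  exists N : nat, forall n : nat, (N <= n)%N ->
  forall (P : prover) (V : verifier), is_PLS_unit_distance k P V ->
  exists (e : rel 'I_n) (id : 'I_n -> nat) (v : 'I_n),
    instance k e id /\ unit_distance_graph e /\
    Rle (Rmult c (INR n)) (INR (size (P n e id v))).
Proof.
move=> k hk; exists (Rinv (IZR 112)); split.
  by apply: Rinv_0_lt_compat; apply: IZR_lt.
exists 300 => n hn P V pls.
set m := (n - 20) %/ 14; have hnm : 14 * m + 20 <= n by lia.
have [|b [j long]] := long_frame_certificate hk hnm pls (L := (m - 5) %/ 4); first by lia.
exists (gadget m (nth false b) (nth false b)), (@seq_ids n), (vtx hnm (strip m + j)).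
split; first exact: gadget_instance.
split; first exact: gadget_unit_distance.
move: long; set s := size _ => long.
have /leP/le_INR : n <= 112 * s by lia.
by rewrite mult_INR INR_IZR_INZ /=; lra.
Qed.
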